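(* Let $(R,\mathfrak m,k)$ be a Noetherian local ring and $N$ a finitely generated $R$-module. The following are equivalent: (1) there is a finitely generated $R$-module $X$ such that $N$ is isomorphic to a Burch submodule of $X$; (2) there is a homomorphism $f:\mathfrak m\to N$ with $f\otimes_R k\neq0$; (3) $\tau_{\mathfrak m}(N)\not\subseteq\mathfrak m N$; (4) the inclusion $\operatorname{Hom}_R(\mathfrak m,\mathfrak m N)\hookrightarrow\operatorname{Hom}_R(\mathfrak m,N)$ induced by $\mathfrak m N\subseteq N$ is not surjective. If moreover $\operatorname{depth} N>0$, these are also equivalent to each of: (5) there is an $N$-regular element $a\in\mathfrak m$ such that $k$ is a direct summand of $N/aN$; (6) there is an $N$-regular element $a\in\mathfrak m$ such that $aN$ is a Burch submodule of $N$.
   Context: For a submodule $N$ of an $R$-module $X$ and an ideal $I$, $(N:_X I)=\{x\in X: Ix\subseteq N\}$. A submodule $N\subseteq X$ is a Burch submodule of $X$ if $\mathfrak m(N:_X\mathfrak m)\neq\mathfrak m N$. For modules $M,X$, the trace $\tau_M(X)=\sum_{f\in\operatorname{Hom}_R(M,X)}\operatorname{Im}(f)\subseteq X$. *)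

From HB Require Import structures.
From mathcomp Require Import all_boot all_order all_algebra.
Set Implicit Arguments. Unset Strict Implicit. Unset Printing Implicit Defensive.
Import GRing.Theory.
Local Open Scope ring_scope.

Section CommAlg.
Variable R : comUnitRingType.

Definition is_ideal (I : R -> Prop) : Prop :=
  [/\ I 0, (forall x y, I x -> I y -> I (x + y)) & (forall r x, I x -> I (r * x))].

Definition fg_ideal (I : R -> Prop) : Prop :=
  exists n (v : 'I_n -> R), forall x, I x <-> exists c : 'I_n -> R, x = \sum_i c i * v i.

Definition noetherian_ring : Prop := forall I, is_ideal I -> fg_ideal I.

Definition local_max (m : R -> Prop) : Prop :=
  [/\ is_ideal m, ~ m 1 & forall x, ~ m x -> x \is a GRing.unit].

Definition fin_gen (M : lmodType R) : Prop :=
  exists n (v : 'I_n -> M), forall x, exists c : 'I_n -> R, x = \sum_i c i *: v i.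

Definition ideal_mul (I : R -> Prop) (M : lmodType R) (S : M -> Prop) : M -> Prop :=
  fun x => exists n (r : 'I_n -> R) (s : 'I_n -> M),
    (forall i, I (r i) /\ S (s i)) /\ x = \sum_i r i *: s i.

Definition colon (X : lmodType R) (S : X -> Prop) (I : R -> Prop) : X -> Prop :=
  fun x => forall r, I r -> S (r *: x).

Definition burch (m : R -> Prop) (X : lmodType R) (S : X -> Prop) : Prop :=
  ~ (forall x, ideal_mul m (colon S m) x <-> ideal_mul m S x).

Definition trace (M X : lmodType R) : X -> Prop :=
  fun x => exists n (f : 'I_n -> {linear M -> X}) (y : 'I_n -> M),
    x = \sum_i f i (y i).

Definition is_quotient (M : lmodType R) (S : M -> Prop) (Q : lmodType R)
  (pi : {linear M -> Q}) : Prop :=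
  (forall q, exists x, pi x = q) /\ (forall x, pi x = 0 <-> S x).

Definition is_submod (M : lmodType R) (S : M -> Prop) (P : lmodType R)
  (j : {linear P -> M}) : Prop :=
  injective j /\ (forall x, S x <-> exists y, j y = x).

Definition regular_elt (N : lmodType R) (a : R) : Prop :=
  (forall x : N, a *: x = 0 -> x = 0) /\ ~ (forall x : N, exists y, x = a *: y).

Definition scal_sub (N : lmodType R) (a : R) : N -> Prop := fun x => exists y, x = a *: y.

(* depth N > 0, i.e. Ext^0_R(k, N) = Hom_R(k, N) = 0, with K a model of k *)
Definition depth_pos (K N : lmodType R) : Prop :=
  forall (g : {linear K -> N}) (z : K), g z = 0.

End CommAlg.

From HB Require Import structures.
From mathcomp Require Import all_boot all_order all_algebra.
From Stdlib Require Import Classical ClassicalEpsilon FunctionalExtensionality PropExtensionality.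
Set Implicit Arguments. Unset Strict Implicit. Unset Printing Implicit Defensive.
Import GRing.Theory.
Local Open Scope ring_scope.

(* All conditions are compared with the pivot condition [hom_m_nontrivial]:
   some f : m -> N maps m outside m N, i.e. f (x) k <> 0.
   - (2), (3), (4) restate the pivot through the universal properties of the
     quotients m/m^2, N/mN and of the submodule mN.
   - (1) -> pivot: a Burch witness r s, with s in (N :_X m), yields
     f : y |-> y s; pivot -> (1): in the pushout X = (R (+) N)/{(y, -f y)},
     the class x0 of (1, 0) lies in (N :_X m) while y x0 = f y is not in m N.
   - Under depth N > 0, prime avoidance (against the ideal {y | f y in mN}
     and the primes of a prime filtration of N) gives an N-regular a in m
     with n = f a outside m N and m n <= a N; this yields (6) directly and
     (5) using a functional N -> k sending n to 1.
   The file first develops the general tools: linear maps from functions,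
   quotient modules, spans and Noetherian finite generation, maximal
   submodules, prime avoidance and prime filtrations; the theorem comes last. *)

(* The
   linearity proof is an (otherwise unused) argument of [lin_of], so the
   canonical linear structure is only declared for genuinely linear f. *)
Section LinearOfFun.
Variables (R : pzRingType) (U V : lmodType R) (f : U -> V).

Definition lin_of (_ : forall a x y, f (a *: x + y) = a *: f x + f y) := f.

Variable f_lin : forall a x y, f (a *: x + y) = a *: f x + f y.
Lemma lin_of_linear : linear (lin_of f_lin). Proof. by move=> a x y; apply: f_lin. Qed.
HB.instance Definition _ := GRing.isLinear.Build R U V *:%R (lin_of f_lin) lin_of_linear.
End LinearOfFun.

Lemma linear_exists (R : pzRingType) (U V : lmodType R) (f : U -> V) :
  (forall a x y, f (a *: x + y) = a *: f x + f y) ->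
  exists g : {linear U -> V}, forall x, g x = f x.
Proof. by move=> f_lin; exists (lin_of f_lin). Qed.

Definition submodule (R : pzRingType) (V : lmodType R) (S : V -> Prop) :=
  [/\ S 0, (forall x y, S x -> S y -> S (x + y)) & (forall a x, S x -> S (a *: x))].

(* The quotient module V / L, built on a set of canonical representatives
   chosen by Hilbert's epsilon; two vectors get the same representative iff
   their difference lies in L. *)
Section QuotientModule.
Variables (R : pzRingType) (V : lmodType R) (L : V -> Prop).
Hypothesis L_sub : submodule L.

Let L0 : L 0. Proof. by case: L_sub. Qed.
Let LD x y : L x -> L y -> L (x + y). Proof. by case: L_sub => _ + _; apply. Qed.
Let LZ a x : L x -> L (a *: x). Proof. by case: L_sub => _ _; apply. Qed.
Let LN x : L x -> L (- x). Proof. by rewrite -scaleN1r; apply: LZ. Qed.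
Let LB x y : L x -> L y -> L (x - y). Proof. by move=> hx /LN; apply: LD. Qed.

Definition qrep (v : V) : V := epsilon (inhabits 0) (fun w => L (v - w)).

Lemma qrepP v : L (v - qrep v).
Proof. by apply: (epsilon_spec (inhabits 0) (fun w => L (v - w))); exists v; rewrite subrr; apply: L0. Qed.

Lemma qrep_eq v w : qrep v = qrep w <-> L (v - w).
Proof.
split=> [e|h].
  by have := LB (qrepP v) (qrepP w); rewrite e opprB addrA subrK.
rewrite /qrep; congr epsilon; apply: functional_extensionality => u.
apply: propositional_extensionality; split => hu.
- by have := LB hu h; rewrite opprB addrC addrA subrK.
- by have := LD h hu; rewrite addrA subrK.
Qed.

Lemma qrep_idem v : qrep (qrep v) = qrep v.
Proof. by apply/qrep_eq; rewrite -opprB; apply/LN/qrepP. Qed.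

Definition quot := {v : V | qrep v == v}.
HB.instance Definition _ := Choice.on quot.

Definition qproj (v : V) : quot := exist _ (qrep v) (introT eqP (qrep_idem v)).

Lemma qprojK (x : quot) : qproj (val x) = x.
Proof. by apply: val_inj; case: x => v /= /eqP. Qed.

Lemma qproj_eq v w : qproj v = qproj w <-> L (v - w).
Proof. by rewrite -qrep_eq; split=> [/(congr1 val)|e] //; apply: val_inj. Qed.

Lemma quot_ind (P : quot -> Prop) : (forall v, P (qproj v)) -> forall x, P x.
Proof. by move=> h x; rewrite -(qprojK x). Qed.

Definition qadd (x y : quot) := qproj (val x + val y).
Definition qopp (x : quot) := qproj (- val x).
Definition qscale (a : R) (x : quot) := qproj (a *: val x).

Lemma qrep_diff v : L (qrep v - v).
Proof. by rewrite -opprB; apply/LN/qrepP. Qed.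

Lemma qaddE v w : qadd (qproj v) (qproj w) = qproj (v + w).
Proof.
apply/qproj_eq; have := LD (qrep_diff v) (qrep_diff w).
by rewrite /= opprD addrACA.
Qed.

Lemma qoppE v : qopp (qproj v) = qproj (- v).
Proof. by apply/qproj_eq; have := LN (qrep_diff v); rewrite /= opprB opprK addrC. Qed.

Lemma qscaleE a v : qscale a (qproj v) = qproj (a *: v).
Proof. by apply/qproj_eq; have := LZ a (qrep_diff v); rewrite scalerBr. Qed.

Lemma qaddA : associative qadd.
Proof. by elim/quot_ind=> x; elim/quot_ind=> y; elim/quot_ind=> z; rewrite !qaddE addrA. Qed.
Lemma qaddC : commutative qadd.
Proof. by elim/quot_ind=> x; elim/quot_ind=> y; rewrite !qaddE addrC. Qed.
Lemma qadd0 : left_id (qproj 0) qadd.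
Proof. by elim/quot_ind=> x; rewrite qaddE add0r. Qed.
Lemma qaddN : left_inverse (qproj 0) qopp qadd.
Proof. by elim/quot_ind=> x; rewrite qoppE qaddE addNr. Qed.
HB.instance Definition _ := GRing.isZmodule.Build quot qaddA qaddC qadd0 qaddN.

Lemma qscaleA a b x : qscale a (qscale b x) = qscale (a * b) x.
Proof. by elim/quot_ind: x => x; rewrite !qscaleE scalerA. Qed.
Lemma qscale1 : left_id 1 qscale.
Proof. by elim/quot_ind=> x; rewrite qscaleE scale1r. Qed.
Lemma qscaleDr : right_distributive qscale +%R.
Proof.
by move=> a; elim/quot_ind=> x; elim/quot_ind=> y; rewrite /GRing.add /= qaddE !qscaleE qaddE scalerDr.
Qed.
Lemma qscaleDl v : {morph qscale^~ v : a b / a + b}.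
Proof. by elim/quot_ind: v => v a b; rewrite /GRing.add /= !qscaleE qaddE scalerDl. Qed.
HB.instance Definition _ :=
  GRing.Zmodule_isLmodule.Build R quot qscaleA qscale1 qscaleDr qscaleDl.

Lemma qproj_lin a x y : qproj (a *: x + y) = a *: qproj x + qproj y.
Proof. by rewrite /GRing.scale /GRing.add /= qscaleE qaddE. Qed.

Lemma qproj0 v : qproj v = 0 <-> L v.
Proof. by rewrite (qproj_eq v 0) subr0. Qed.
End QuotientModule.

Lemma quotient_exists (R : pzRingType) (V : lmodType R) (L : V -> Prop) :
  submodule L -> exists (Q : lmodType R) (pi : {linear V -> Q}),
    (forall q, exists x, pi x = q) /\ (forall x, pi x = 0 <-> L x).
Proof.
move=> L_sub; have [pi pi_E] := linear_exists (qproj_lin L_sub).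
eexists; exists pi; split=> [q|x]; last by rewrite pi_E; apply: qproj0.
by exists (val q); rewrite pi_E qprojK.
Qed.

Lemma factor_through_surj (R : pzRingType) (V Q W : lmodType R)
    (pi : {linear V -> Q}) (h : {linear V -> W}) :
  (forall q, exists x, pi x = q) -> (forall x, pi x = 0 -> h x = 0) ->
  exists hb : {linear Q -> W}, forall x, hb (pi x) = h x.
Proof.
move=> pi_sur pi_ker.
pose s q := epsilon (inhabits 0) (fun x => pi x = q).
have sP q : pi (s q) = q by apply: (epsilon_spec (inhabits 0) (fun x => pi x = q)).
have h_compat x y : pi x = pi y -> h x = h y.
  by move=> e; apply/eqP; rewrite -subr_eq0 -linearB pi_ker // linearB e subrr.
have [hb hbE] : exists hb : {linear Q -> W}, forall q, hb q = h (s q).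
  by apply: linear_exists => a p q; rewrite -linearP; apply: h_compat; rewrite linearP !sP.
by exists hb => x; rewrite hbE; apply: h_compat; rewrite sP.
Qed.

Lemma factor_through_inj (R : pzRingType) (P M N : lmodType R)
    (j : {linear P -> N}) (f : {linear M -> N}) :
  injective j -> (forall x, exists y, j y = f x) ->
  exists g : {linear M -> P}, forall x, j (g x) = f x.
Proof.
move=> j_inj f_img.
pose s x := epsilon (inhabits 0) (fun y => j y = f x).
have sP x : j (s x) = f x by apply: (epsilon_spec (inhabits 0) (fun y => j y = f x)).
have [g gE] : exists g : {linear M -> P}, forall x, g x = s x.
  by apply: linear_exists => a x y; apply: j_inj; rewrite linearP !sP linearP.
by exists g => x; rewrite gE sP.
Qed.

Section Submodules.
Variable R : comUnitRingType.
Implicit Types (V W : lmodType R) (I : R -> Prop).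

Lemma submodN V (S : V -> Prop) : submodule S -> forall x, S x -> S (- x).
Proof. by case=> _ _ SZ x; rewrite -scaleN1r; apply: SZ. Qed.

Lemma submodB V (S : V -> Prop) : submodule S -> forall x y, S x -> S y -> S (x - y).
Proof. by move=> hS x y hx /(submodN hS); case: hS => _ SD _; apply: SD. Qed.

Lemma submod_sum V (S : V -> Prop) (J : Type) (r : seq J) (P : pred J) (F : J -> V) :
  submodule S -> (forall i, P i -> S (F i)) -> S (\sum_(i <- r | P i) F i).
Proof. by case=> S0 SD _ h; apply: big_ind. Qed.

Lemma submodule_ext V (S S' : V -> Prop) :
  (forall x, S x <-> S' x) -> submodule S -> submodule S'.
Proof.
move=> e [S0 SD SZ]; split; first exact/e.
- by move=> x y /e hx /e hy; apply/e; apply: SD.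
- by move=> a x /e hx; apply/e; apply: SZ.
Qed.

Lemma image_submodule V W (g : {linear V -> W}) : submodule (fun x => exists y, g y = x).
Proof.
split; first by exists 0; rewrite linear0.
- by move=> _ _ [x <-] [y <-]; exists (x + y); rewrite linearD.
- by move=> a _ [x <-]; exists (a *: x); rewrite linearZ.
Qed.

Lemma kernel_submodule V W (h : {linear V -> W}) : submodule (fun x => h x = 0).
Proof.
split; first exact: linear0.
- by move=> x y hx hy; rewrite linearD hx hy addr0.
- by move=> a x hx; rewrite linearZ hx; apply: scaler0.
Qed.

Lemma ideal_add I a b : is_ideal I -> I a -> I b -> I (a + b).
Proof. by case=> _ ID _; apply: ID. Qed.
Lemma ideal_mulr I a b : is_ideal I -> I b -> I (a * b).
Proof. by case=> _ _ IM; apply: IM. Qed.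
Lemma ideal_mull I a b : is_ideal I -> I a -> I (a * b).
Proof. by rewrite mulrC; apply: ideal_mulr. Qed.
Lemma ideal_sub I a b : is_ideal I -> I a -> I b -> I (a - b).
Proof. by move=> hI ha hb; apply: ideal_add ha _ => //; rewrite -mulN1r; apply: ideal_mulr. Qed.

Lemma ideal_mul1 V I (S : V -> Prop) r s : I r -> S s -> ideal_mul I S (r *: s).
Proof. by move=> hr hs; exists 1%N, (fun _ => r), (fun _ => s); rewrite big_ord1. Qed.

Lemma ideal_mul_min V I (S T : V -> Prop) : submodule T ->
  (forall r s, I r -> S s -> T (r *: s)) -> forall x, ideal_mul I S x -> T x.
Proof.
move=> hT h x [n [r [s [hrs ->]]]]; apply: submod_sum => // i _.
by case: (hrs i); apply: h.
Qed.

Lemma ideal_mul_submodule V I (S : V -> Prop) : is_ideal I -> submodule (ideal_mul I S).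
Proof.
move=> hI; split.
- by exists 0%N, (fun _ => 0), (fun _ => 0); split; [case|rewrite big_ord0].
- move=> _ _ [n1 [r1 [s1 [h1 ->]]]] [n2 [r2 [s2 [h2 ->]]]].
  exists (n1 + n2)%N, (fun i => match split i with inl a => r1 a | inr b => r2 b end),
    (fun i => match split i with inl a => s1 a | inr b => s2 b end); split.
    by move=> i; case: (split i).
  rewrite big_split_ord /=; congr (_ + _); apply: eq_bigr => i _.
  + by rewrite (unsplitK (inl i)).
  + by rewrite (unsplitK (inr i)).
- move=> a _ [n [r [s [h ->]]]]; exists n, (fun i => a * r i), s; split.
    by move=> i; case: (h i) => hr hs; split=> //; apply: ideal_mulr.
  by rewrite scaler_sumr; apply: eq_bigr => i _; rewrite scalerA.
Qed.

Lemma ideal_mul_mono V I (S S' : V -> Prop) :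
  (forall x, S x -> S' x) -> forall x, ideal_mul I S x -> ideal_mul I S' x.
Proof.
move=> e x [n [r [s [h ->]]]]; exists n, r, s; split=> // i.
by case: (h i) => ? /e.
Qed.

Lemma ideal_mul_ext V I (S S' : V -> Prop) :
  (forall x, S x <-> S' x) -> forall x, ideal_mul I S x <-> ideal_mul I S' x.
Proof. by move=> e x; split; apply: ideal_mul_mono => y /e. Qed.

Lemma ideal_mul_image V W I (S : V -> Prop) (S' : W -> Prop) (h : {linear V -> W}) :
  (forall s, S s -> S' (h s)) -> forall x, ideal_mul I S x -> ideal_mul I S' (h x).
Proof.
move=> hS x [n [r [s [hrs ->]]]]; exists n, r, (fun i => h (s i)); split.
  by move=> i; case: (hrs i) => ? /hS.
by rewrite linear_sum; apply: eq_bigr => i _; rewrite linearZ.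
Qed.

Lemma ideal_mul_of_image V W I (g : {linear V -> W}) : is_ideal I ->
  forall x, ideal_mul I (fun x => exists y, g y = x) x ->
  exists y, ideal_mul I (fun _ => True) y /\ g y = x.
Proof.
move=> hI; apply: ideal_mul_min.
- have [T0 TD TZ] := ideal_mul_submodule (fun _ : V => True) hI.
  rewrite /submodule; split.
  + by exists 0; rewrite linear0.
  + by move=> _ _ [x [hx <-]] [y [hy <-]]; exists (x + y); rewrite linearD; split=> //; apply: TD.
  + by move=> a _ [x [hx <-]]; exists (a *: x); rewrite linearZ; split=> //; apply: TZ.
- by move=> r _ hr [y <-]; exists (r *: y); rewrite linearZ; split=> //; apply: ideal_mul1.
Qed.

Definition comb V (l : seq (R * V)) : V := \sum_(p <- l) p.1 *: p.2.

Definition lin_span V (P : V -> Prop) (x : V) :=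
  exists l : seq (R * V), (forall p, p \in l -> P p.2) /\ x = comb l.

Definition fg V (S : V -> Prop) :=
  exists l : seq V, (forall v, v \in l -> S v) /\ forall x, S x -> lin_span (fun v => v \in l) x.

Lemma lspan_submodule V (P : V -> Prop) : submodule (lin_span P).
Proof.
split; first by exists [::]; rewrite /comb big_nil.
- move=> _ _ [l1 [h1 ->]] [l2 [h2 ->]]; exists (l1 ++ l2); split; last by rewrite /comb big_cat.
  by move=> p; rewrite mem_cat => /orP [/h1|/h2].
- move=> a _ [l [h ->]]; exists [seq (a * p.1, p.2) | p <- l]; split.
    by move=> q /mapP [p hp ->] /=; apply: h.
  by rewrite /comb big_map scaler_sumr; apply: eq_bigr => p _; rewrite scalerA.
Qed.

Lemma lspan_in V (P : V -> Prop) v : P v -> lin_span P v.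
Proof.
move=> h; exists [:: (1, v)]; split; last by rewrite /comb big_seq1 scale1r.
by move=> p; rewrite inE => /eqP ->.
Qed.

Lemma lspan_min V (P T : V -> Prop) : submodule T -> (forall v, P v -> T v) ->
  forall x, lin_span P x -> T x.
Proof.
move=> hT h x [l [hl ->]]; rewrite /comb big_seq; apply: submod_sum => // p /hl /h.
by case: hT => _ _; apply.
Qed.

Lemma lspan_mono V (P P' : V -> Prop) : (forall v, P v -> P' v) ->
  forall x, lin_span P x -> lin_span P' x.
Proof. by move=> h; apply: lspan_min; [apply: lspan_submodule|move=> v /h; apply: lspan_in]. Qed.

Lemma lspan_ord V (P : V -> Prop) n (c : 'I_n -> R) (v : 'I_n -> V) :
  (forall i, P (v i)) -> lin_span P (\sum_i c i *: v i).
Proof.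
move=> h; exists [seq (c i, v i) | i <- index_enum 'I_n]; split; last by rewrite /comb big_map.
by move=> q /mapP [i _ ->]; apply: h.
Qed.

Lemma lspan_nil V (x : V) : lin_span (fun _ => False) x -> x = 0.
Proof. by case=> [[|p l]] [hl ->]; [rewrite /comb big_nil|case: (hl p (mem_head _ _))]. Qed.

Lemma lspan_cons V (Q : V -> Prop) (v x : V) :
  lin_span (fun u => u = v \/ Q u) x -> exists c x', lin_span Q x' /\ x = c *: v + x'.
Proof.
case=> l [hl ->]; elim: l hl => [|p l IH] hl.
  by exists 0, 0; split; [case: (lspan_submodule Q)|rewrite /comb big_nil scale0r addr0].
have [c [x' [hx' e]]] : exists c x', lin_span Q x' /\ comb l = c *: v + x'.
  by apply: IH => q hq; apply: hl; rewrite inE hq orbT.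
rewrite /comb big_cons -/(comb l) e.
case: (hl p (mem_head _ _)) => [->|hp].
- by exists (p.1 + c), x'; rewrite scalerDl addrA.
- exists c, (p.1 *: p.2 + x'); rewrite addrCA; split=> //.
  by case: (lspan_submodule Q) => _ SD SZ; apply: SD => //; apply/SZ/lspan_in.
Qed.
End Submodules.

Section FiniteGeneration.
Variable R : comUnitRingType.
Implicit Types (V : lmodType R).

Lemma fg_modulo V (S W : V -> Prop) (l : seq V) :
  submodule S -> submodule W -> (forall v, v \in l -> S v) ->
  fg (fun x => S x /\ W x) ->
  (forall x, S x -> exists y, lin_span (fun v => v \in l) y /\ W (x - y)) -> fg S.
Proof.
move=> hS hW lS [l' [l'S l'gen]] hmod.
exists (l ++ l'); split=> [v|x Sx]; first by rewrite mem_cat => /orP [/lS|/l'S []].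
have [y [y_span Wxy]] := hmod x Sx.
have Sy : S y by apply: lspan_min y_span.
have [_ SD _] := lspan_submodule (fun v => v \in l ++ l').
rewrite -(subrK y x); apply: SD.
- apply: lspan_mono (l'gen _ (conj (submodB hS Sx Sy) Wxy)) => v hv.
  by rewrite mem_cat hv orbT.
- by apply: lspan_mono y_span => v hv; rewrite mem_cat hv.
Qed.

Definition lead_ideal V (W S : V -> Prop) (v : V) (c : R^o) :=
  exists x, W x /\ S (x + c *: v).

Lemma lead_ideal_submodule V (W S : V -> Prop) v :
  submodule W -> submodule S -> submodule (lead_ideal W S v).
Proof.
move=> [W0 WD WZ] [S0 SD SZ]; split.
- by exists 0; rewrite scale0r addr0.
- move=> c1 c2 [x1 [W1 S1]] [x2 [W2 S2]]; exists (x1 + x2); split; first exact: WD.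
  by have := SD _ _ S1 S2; rewrite scalerDl addrACA.
- move=> a c [x [Wx Sx]]; exists (a *: x); split; first exact: WZ.
  by have := SZ a _ Sx; rewrite scalerDr scalerA.
Qed.

Hypothesis R_noeth : noetherian_ring R.

Lemma noetherian_ideal_fg (I : R^o -> Prop) : submodule I -> fg I.
Proof.
move=> hI; have [n [v hv]] := R_noeth (I := I) hI.
exists [seq v i | i <- index_enum 'I_n]; split.
- move=> _ /mapP [i _ ->]; apply/hv; exists (fun j => (j == i)%:R).
  rewrite (bigD1 i) //= eqxx mul1r big1 ?addr0 // => j /negbTE ->; by rewrite mul0r.
- move=> x /hv [c ->]; apply: (lspan_ord (P := fun u : R^o => u \in _)) => i.
  by apply: map_f; rewrite mem_index_enum.
Qed.

(* Induction on the spanning list v :: vs: with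
   W = span vs, the ideal of leading coefficients of S along v is generated
   by some c_i; lifting them to elements wit c_i + c_i v of S spans S modulo
   W, and S n W is finitely generated by induction. *)
Lemma fg_sub_span V (vs : seq V) (S : V -> Prop) :
  submodule S -> (forall x, S x -> lin_span (fun u => u \in vs) x) -> fg S.
Proof.
elim: vs S => [|v vs IH] S hS S_span.
  exists [::]; split=> [//|x Sx].
  have -> : x = 0 by apply: lspan_nil; apply: lspan_mono (S_span x Sx).
  by case: (lspan_submodule (fun u : V => u \in [::])).
pose W := lin_span (fun u => u \in vs); have hW : submodule W := lspan_submodule _.
have hSW : submodule (fun x => S x /\ W x).
  case: hS hW => [S0 SD SZ] [W0 WD WZ]; split=> //.
  - by move=> x y [??] [??]; split; [apply: SD|apply: WD].
  - by move=> a x [??]; split; [apply: SZ|apply: WZ].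
have [cl [clI cl_gen]] := noetherian_ideal_fg (lead_ideal_submodule v hW hS).
pose wit c := epsilon (inhabits 0) (fun x => W x /\ S (x + c *: v)).
have witP c : lead_ideal W S v c -> W (wit c) /\ S (wit c + c *: v).
  exact: (epsilon_spec (inhabits 0) (fun x => W x /\ S (x + c *: v))).
apply: (fg_modulo (l := [seq wit c + c *: v | c <- cl]) hS hW).
- by move=> _ /mapP [c /clI /witP [] _ ? ->].
- by apply: IH => // x [].
move=> x Sx.
have [d [x' [Wx' ex]]] : exists d x', W x' /\ x = d *: v + x'.
  by apply: lspan_cons; apply: lspan_mono (S_span x Sx) => u; rewrite inE => /orP [/eqP|]; auto.
have lead_d : lead_ideal W S v d by exists x'; rewrite addrC -ex.
have [lst [lst_cl ed]] := cl_gen d lead_d; rewrite ex ed.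
exists (\sum_(p <- lst) p.1 *: (wit p.2 + p.2 *: v)); split.
  exists [seq (p.1, wit p.2 + p.2 *: v) | p <- lst]; split; last by rewrite /comb big_map.
  by move=> q /mapP [p /lst_cl hp ->]; apply: map_f.
have -> : \sum_(p <- lst) p.1 *: (wit p.2 + p.2 *: v) =
          \sum_(p <- lst) p.1 *: wit p.2 + comb lst *: v.
  by rewrite /comb scaler_suml -big_split; apply: eq_bigr => p _; rewrite scalerDr scalerA.
rewrite [comb lst *: v + x']addrC opprD addrACA subrr addr0; apply: (submodB hW Wx').
rewrite big_seq; apply: submod_sum => // p /lst_cl /clI /witP [Wp _].
by case: hW => _ _; apply.
Qed.

Lemma noetherian_fg (N : lmodType R) : fin_gen N -> forall S : N -> Prop, submodule S -> fg S.
Proof.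
move=> [n [v hv]] S hS; apply: (fg_sub_span (vs := [seq v i | i <- index_enum 'I_n])) => // x _.
by have [c ->] := hv x; apply: lspan_ord => i; apply: map_f; rewrite mem_index_enum.
Qed.
End FiniteGeneration.

Section Maximality.
Variables (R : comUnitRingType) (V : lmodType R).
Hypothesis V_noeth : forall S : V -> Prop, submodule S -> fg S.

(* Ascending chain condition: the union of the chain is finitely generated,
   so all its generators already lie in some member. *)
Lemma ascending_chain_stops (s : nat -> V -> Prop) :
  (forall k, submodule (s k)) -> (forall k x, s k x -> s k.+1 x) ->
  exists K, forall x, s K.+1 x -> s K x.
Proof.
move=> s_sub s_incr.
have s_mono i j : (i <= j)%N -> forall x, s i x -> s j x.
  move=> /subnK <- x hx; elim: (j - i)%N => [|k IH]; first by rewrite add0n.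
  by rewrite addSn; apply: s_incr.
pose U x := exists k, s k x.
have hU : submodule U.
  split; first by exists 0%N; case: (s_sub 0%N).
  - move=> x y [k1 h1] [k2 h2]; exists (maxn k1 k2).
    case: (s_sub (maxn k1 k2)) => _ SD _; apply: SD.
    + exact: s_mono (leq_maxl _ _) _ h1.
    + exact: s_mono (leq_maxr _ _) _ h2.
  - by move=> a x [k h]; exists k; case: (s_sub k) => _ _; apply.
have [l [lU l_gen]] := V_noeth hU.
have [K hK] : exists K, forall v, v \in l -> s K v.
  elim: l lU {l_gen} => [|v l IH] lU; first by exists 0%N.
  have [K' hK'] := IH (fun u hu => lU u (@mem_behead _ (v :: l) u hu)).
  have [k hk] := lU v (mem_head _ _).
  exists (maxn k K') => u; rewrite inE => /orP [/eqP ->|/hK'].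
    exact: s_mono (leq_maxl _ _) _ hk.
  exact: s_mono (leq_maxr _ _) _.
by exists K => x hx; apply: lspan_min (s_sub K) hK _ (l_gen x (ex_intro _ _ hx)).
Qed.

(* Every nonempty family F of submodules has a maximal element; otherwise
   choice would build a strictly ascending chain. *)
Lemma noetherian_maximal (F : (V -> Prop) -> Prop) :
  (forall S, F S -> submodule S) -> forall S0, F S0 ->
  exists S, F S /\ forall S', F S' -> (forall x, S x -> S' x) -> forall x, S' x -> S x.
Proof.
move=> F_sub S0 FS0; apply: NNPP => no_max.
pose bigger S S' := F S' /\ (forall x, S x -> S' x) /\ ~ (forall x, S' x -> S x).
have step S : F S -> exists S', bigger S S'.
  move=> FS; apply: NNPP => h; apply: no_max; exists S; split=> // S' FS' sub x hx.
  by apply: NNPP => hx'; apply: h; exists S'; split=> //; split=> // H; apply/hx'/H.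
pose next S := epsilon (inhabits S0) (bigger S).
have nextP S : F S -> bigger S (next S).
  by move=> /step; apply: (epsilon_spec (inhabits S0) (bigger S)).
pose s k := iter k next S0.
have Fs k : F (s k) by elim: k => //= k IH; case: (nextP _ IH).
have [K hK] := ascending_chain_stops (fun k => F_sub _ (Fs k))
  (fun k => proj1 (proj2 (nextP _ (Fs k)))).
by case: (nextP _ (Fs K)) => _ [_]; apply.
Qed.
End Maximality.

Section PrimeAvoidance.
Variable R : comUnitRingType.
Implicit Types (I J P Q : R -> Prop) (Ps : seq (R -> Prop)).

Definition prime_ideal P :=
  [/\ is_ideal P, ~ P 1 & forall a b, P (a * b) -> P a \/ P b].

(* If no ideal of Qs is contained in the prime P, some element outside P lies
   in every ideal of Qs (take a product of witnesses). *)
Lemma prime_avoid_product P Ps : prime_ideal P ->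
  (forall Q, List.In Q Ps -> is_ideal Q /\ exists q, Q q /\ ~ P q) ->
  exists z, ~ P z /\ forall Q, List.In Q Ps -> Q z.
Proof.
move=> [_ P1 P_prime]; elim: Ps => [|Q Qs IH] h; first by exists 1.
have [z [Pz Qs_z]] := IH (fun Q' hQ' => h Q' (or_intror hQ')).
have [hQ [q [Qq Pq]]] := h Q (or_introl erefl).
exists (q * z); split; first by case/P_prime.
move=> Q' [<-|hQ']; first by apply: ideal_mull.
by have [hQ'i _] := h Q' (or_intror hQ'); apply: ideal_mulr => //; apply: Qs_z.
Qed.

Lemma avoid_sum I J P (Qs : (R -> Prop) -> Prop) x z :
  is_ideal I -> is_ideal J -> is_ideal P -> (forall Q, Qs Q -> is_ideal Q) ->
  I x -> ~ J x -> P x -> (forall Q, Qs Q -> ~ Q x) ->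
  I z -> J z -> ~ P z -> (forall Q, Qs Q -> Q z) ->
  [/\ I (x + z), ~ J (x + z), ~ P (x + z) & forall Q, Qs Q -> ~ Q (x + z)].
Proof.
move=> hI hJ hP hQs Ix Jx Px Qx Iz Jz Pz Qz; split; first exact: ideal_add.
- by move=> /(ideal_sub hJ)/(_ Jz); rewrite addrK.
- by move=> /(ideal_sub hP)/(_ Px); rewrite addrC addKr.
- by move=> Q hQ /(ideal_sub (hQs Q hQ))/(_ (Qz Q hQ)); rewrite addrK; apply: Qx.
Qed.

Definition avoidable Ps I := forall J, is_ideal J -> (exists x, I x /\ ~ J x) ->
  exists x, [/\ I x, ~ J x & forall P, List.In P Ps -> (exists y, I y /\ ~ P y) -> ~ P x].

Lemma avoidable_nil I : avoidable [::] I.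
Proof. by move=> J _ [x [Ix Jx]]; exists x. Qed.

Lemma avoidable_cons_sup P Ps I : (forall y, I y -> P y) -> avoidable Ps I -> avoidable (P :: Ps) I.
Proof.
move=> IP hav J hJ IJ; have [x [Ix Jx hx]] := hav J hJ IJ.
by exists x; split=> // Q [<- [y [Iy Py]]|/hx //]; case: Py; apply: IP.
Qed.

(* A member Q contained in another member P not containing I is redundant:
   avoiding P avoids Q. *)
Lemma avoidable_redundant P Q A B I : (forall y, Q y -> P y) -> (exists y, I y /\ ~ P y) ->
  avoidable (P :: A ++ B) I -> avoidable (P :: A ++ Q :: B) I.
Proof.
move=> QP IP hav J hJ IJ; have [x [Ix Jx hx]] := hav J hJ IJ.
have hxAB Q' : List.In Q' A \/ List.In Q' B -> (exists y, I y /\ ~ Q' y) -> ~ Q' x.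
  by move=> hQ'; apply: hx; right; apply: List.in_or_app.
exists x; split=> // Q' [<-|hQ']; first by apply: hx; left.
case: (List.in_app_or _ _ _ hQ') => [hA|[<- _ /QP|hB]].
- by apply: hxAB; left.
- by apply: hx IP; left.
- by apply: hxAB; right.
Qed.

(* Given x avoiding J and Ps but lying in P, either J <= P
   (then avoid P instead of J) or x + i j z avoids everything, where i, j, z
   lie outside P in I, J and all members of Ps respectively. *)
Lemma avoidable_cons_prime P Ps I : is_ideal I -> prime_ideal P -> (exists y, I y /\ ~ P y) ->
  (forall Q, List.In Q Ps -> is_ideal Q /\ exists q, Q q /\ ~ P q) ->
  avoidable Ps I -> avoidable (P :: Ps) I.
Proof.
move=> hI hP IP hQs hav J hJ IJ; have [P_ideal _ P_prime] := hP.
have [x [Ix Jx hx]] := hav J hJ IJ.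
case: (classic (P x)) => Px; last by exists x; split=> // Q [<-|/hx].
case: (classic (forall y, J y -> P y)) => [JP|].
  have [x' [Ix' Px' hx']] := hav P P_ideal IP.
  by exists x'; split=> //; [move/JP|move=> Q [<- _ //|/hx']].
move=> /not_all_ex_not [j /(imply_to_and (J j)) [Jj Pj]].
have [i [Ii Pi]] := IP.
have [z0 [Pz0 Qz0]] := prime_avoid_product hP hQs.
have Pz : ~ P (i * (j * z0)) by do 2![case/P_prime => //].
have [] := avoid_sum (z := i * (j * z0))
  (Qs := fun Q => List.In Q Ps /\ exists y, I y /\ ~ Q y) hI hJ P_ideal
  (fun Q hQ => (hQs Q hQ.1).1) Ix Jx Px (fun Q hQ => hx Q hQ.1 hQ.2).
- exact: ideal_mull.
- by rewrite mulrCA; apply: ideal_mull.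
- by [].
- by move=> Q [hQ _]; do 2!apply: ideal_mulr (hQs Q hQ).1 _; apply: Qz0.
move=> Ixz Jxz Pxz Qxz; exists (x + i * (j * z0)); split=> // Q [<- //|hQ hIQ].
exact: Qxz.
Qed.

(* Prime avoidance, by induction on the number of primes: drop primes
   containing I and redundant primes, then add the remaining ones. *)
Lemma prime_avoidance Ps I : is_ideal I ->
  (forall P, List.In P Ps -> prime_ideal P) -> avoidable Ps I.
Proof.
move=> hI; have [n] : exists n, (size Ps <= n)%N by exists (size Ps).
elim: n Ps => [|n IH] [|P Ps] //= hsz hPs; try exact: avoidable_nil.
have hPs' Q : List.In Q Ps -> prime_ideal Q by move=> hQ; apply: hPs; right.
case: (classic (exists y, I y /\ ~ P y)) => [IP|IP]; last first.
  apply: avoidable_cons_sup (IH Ps hsz hPs') => y Iy.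
  by apply: NNPP => Py; apply: IP; exists y.
case: (classic (exists Q, List.In Q Ps /\ forall y, Q y -> P y)) => [[Q [hQ QP]]|noQ].
  have [A [B eAB]] := List.in_split Q Ps hQ; rewrite eAB.
  apply: avoidable_redundant QP IP (IH _ _ _).
  - by move: hsz; rewrite eAB /= !size_cat /= addnS.
  - move=> Q' [<-|hQ']; first by apply: hPs; left.
    apply: hPs'; rewrite eAB; apply: List.in_or_app.
    by case: (List.in_app_or _ _ _ hQ'); [left|right; right].
apply: avoidable_cons_prime (hPs P (or_introl erefl)) IP _ (IH Ps hsz hPs') => //.
move=> Q hQ; split; first by case: (hPs' Q hQ).
apply: NNPP => nq; apply: noQ; exists Q; split=> // y Qy.
by apply: NNPP => Py; apply: nq; exists y.
Qed.
End PrimeAvoidance.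

Section PrimeFiltration.
Variables (R : comUnitRingType) (N : lmodType R).
Implicit Type fl : seq (N * (R -> Prop)).

(* A list fl of pairs (n_i, P_i) encodes the chain of submodules spanned by
   its suffixes; it is a prime filtration when each P_i is prime and is the
   annihilator of n_i modulo the span of the later entries, i.e. each
   successive quotient is isomorphic to R / P_i. *)
Definition filt_span fl := lin_span (fun v => exists P, List.In (v, P) fl).

Fixpoint prime_filtration fl : Prop :=
  match fl with
  | [::] => True
  | (n, P) :: fl' =>
      [/\ prime_filtration fl', prime_ideal P & forall r, P r <-> filt_span fl' (r *: n)]
  end.

Lemma prime_filtration_prime fl : prime_filtration fl ->
  forall n P, List.In (n, P) fl -> prime_ideal P.
Proof.
elim: fl => [//|[n Q] fl IH] /= [hfl hQ _] n' P [[_ <-] //|].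
exact: IH.
Qed.

Lemma colon_submodule (S : N -> Prop) n : submodule S -> submodule (fun r : R^o => S (r *: n)).
Proof.
case=> S0 SD SZ; split; first by rewrite scale0r.
- by move=> a b ha hb; rewrite scalerDl; apply: SD.
- by move=> a b hb; change (S ((a * b) *: n)); rewrite -scalerA; apply: SZ.
Qed.

Lemma ann_top_step n P fl x : prime_ideal P ->
  (forall r, P r <-> filt_span fl (r *: n)) -> filt_span ((n, P) :: fl) x -> x <> 0 ->
  (forall t, filt_span fl (t *: x) -> t *: x = 0) -> forall r, P r <-> r *: x = 0.
Proof.
move=> [hP _ P_prime] eP x_span x0 x_top r.
have [S0 SD SZ] := lspan_submodule (fun v => exists P, List.In (v, P) fl).
have [c [x' [x'_span ex]]] : exists c x', filt_span fl x' /\ x = c *: n + x'.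
  by apply: lspan_cons; apply: lspan_mono x_span => v [Q [[-> _]|]]; [left|right; exists Q].
have Pc : ~ P c.
  move=> /eP cn; apply: x0; rewrite -[x]scale1r; apply: x_top.
  by rewrite scale1r ex; apply: SD.
split=> [Pr|rx0].
- apply: x_top; rewrite ex scalerDr scalerA; apply: SD (SZ _ _ x'_span).
  by apply/eP; apply: ideal_mull.
- have /eP : filt_span fl ((r * c) *: n).
    have -> : (r * c) *: n = - (r *: x') by rewrite -scalerA -[RHS]add0r -rx0 ex scalerDr addrK.
    by rewrite -scaleN1r; apply: (SZ); apply: (SZ).
  by case/P_prime.
Qed.

Lemma zero_divisor_filtration fl : prime_filtration fl ->
  forall x, filt_span fl x -> x <> 0 -> forall z, z *: x = 0 ->
  exists n P, [/\ List.In (n, P) fl, P z & exists y : N, y <> 0 /\ forall r, P r -> r *: y = 0].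
Proof.
elim: fl => [|[n P] fl IH] /= hfl x x_span x0 z zx.
  by case: x0; apply: lspan_nil; apply: lspan_mono x_span => v [].
case: hfl => [hfl hP eP].
case: (classic (exists t, filt_span fl (t *: x) /\ t *: x <> 0)) => [[t [tx tx0]]|x_top].
  have [|n' [P' [hin P'z ann]]] := IH hfl _ tx tx0 z; last by exists n', P'; split=> //; right.
  by rewrite scalerA mulrC -scalerA zx scaler0.
have {}x_top t : filt_span fl (t *: x) -> t *: x = 0.
  by move=> tx; apply: NNPP => tx0; apply: x_top; exists t.
have annP := ann_top_step hP eP x_span x0 x_top.
by exists n, P; split; [left|apply/annP|exists x; split=> // r /annP].
Qed.

Hypothesis R_noeth : noetherian_ring R.

(* Associated primes exist: among the ideals (S :_R n) with n outside S, a
   maximal one is prime. *)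
Lemma exists_prime_colon (S : N -> Prop) x : submodule S -> ~ S x ->
  exists n P, [/\ ~ S n, prime_ideal P & forall r, P r <-> S (r *: n)].
Proof.
move=> hS Sx.
pose G (I : R^o -> Prop) := exists n, ~ S n /\ forall r, I r <-> S (r *: n).
have G_sub I : G I -> submodule I.
  by case=> n [_ e]; apply: submodule_ext (colon_submodule n hS) => r; split=> /e.
have [I [[n [Sn eI]] I_max]] := noetherian_maximal (noetherian_ideal_fg R_noeth) G_sub
  (ex_intro _ x (conj Sx (fun r => iff_refl _))).
have [I0 ID IM] := G_sub I (ex_intro _ n (conj Sn eI)).
exists n, I; split=> //; split=> //; first by move/eI; rewrite scale1r.
move=> a b hab; case: (classic (I a)) => Ia; [by left|right].
have G_an : G (fun r => S (r *: (a *: n))).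
  by exists (a *: n); split=> [h|//]; apply/Ia/eI.
apply: (I_max _ G_an) => [r /eI|]; last by rewrite scalerA mulrC; apply/eI.
by rewrite scalerA mulrC -scalerA; case: hS => _ _; apply.
Qed.

(* A finitely generated module over a Noetherian ring has a prime filtration:
   extend a maximal prime-filtered submodule by an associated prime of the
   quotient. *)
Lemma prime_filtration_exists : fin_gen N ->
  exists fl, prime_filtration fl /\ forall x, filt_span fl x.
Proof.
move=> HN.
pose F (S : N -> Prop) := exists fl, prime_filtration fl /\ forall x, S x <-> filt_span fl x.
have F_sub S : F S -> submodule S.
  by case=> fl [_ e]; apply: submodule_ext (lspan_submodule _) => x; split=> /e.
have [S [[fl [hfl eS]] S_max]] := noetherian_maximal (noetherian_fg R_noeth HN) F_sub
  (ex_intro _ [::] (conj I (fun x => iff_refl _))).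
exists fl; split=> // x; apply/eS; apply: NNPP => Sx.
have [n [P [Sn hP eP]]] := exists_prime_colon (F_sub S (ex_intro _ fl (conj hfl eS))) Sx.
have F_ext : F (filt_span ((n, P) :: fl)).
  by exists ((n, P) :: fl); split=> //; split=> // r; rewrite eP eS.
apply/Sn/(S_max _ F_ext); last by apply: lspan_in; exists P; left.
by move=> y /eS; apply: lspan_mono => v [Q hQ]; exists Q; right.
Qed.
End PrimeFiltration.

Section Pushout.
Variables (R : comUnitRingType) (M N : lmodType R).
Variables (iota : {linear M -> R^o}) (f : {linear M -> N}).
Hypothesis iota_inj : injective iota.

(* The pushout of f along the inclusion iota of an ideal:
   X = (R (+) N) / {(iota y, - f y)}.  N embeds into X, and the class x0 of
   (1, 0) satisfies iota y *: x0 = f y, so that X = R x0 + N. *)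
Lemma pushout_exists : exists (X : lmodType R) (g : {linear N -> X}) (x0 : X),
  [/\ injective g, forall y, iota y *: x0 = g (f y) &
   forall x : X, exists (r : R) (n : N), x = r *: x0 + g n].
Proof.
pose L (v : (R^o * N)%type) := exists y, v = (iota y, - f y).
have hL : submodule L.
  rewrite /submodule; split; first by exists 0; rewrite !linear0 ?oppr0.
  - by move=> _ _ [a ->] [b ->]; exists (a + b); rewrite !linearD.
  - by move=> c _ [a ->]; exists (c *: a); rewrite !linearZ.
have [X [pi [pi_sur pi_ker]]] := quotient_exists hL.
have pi_eq u v : pi u = pi v <-> L (u - v).
  by rewrite -pi_ker linearB; split=> [->|/eqP]; rewrite ?subrr // subr_eq0 => /eqP.
have [g gE] : exists g : {linear N -> X}, forall n, g n = pi (0, n).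
  apply: linear_exists => a x y; rewrite -linearP; f_equal.
  by change (((0 : R^o), a *: x + y) = (a *: (0 : R^o) + 0, a *: x + y)); rewrite scaler0 addr0.
pose x0 := pi (1, 0); exists X, g, x0; split.
- move=> a b; rewrite !gE => /pi_eq [y [e1 e2]].
  have y0 : y = 0 by apply: iota_inj; rewrite linear0 -e1 subrr.
  by apply/eqP; rewrite -subr_eq0; apply/eqP; rewrite e2 y0 linear0 oppr0.
- move=> y; rewrite gE /x0 -linearZ; apply/pi_eq; exists y.
  change ((iota y * 1 - 0, iota y *: (0 : N) - f y) = (iota y, - f y)).
  by rewrite mulr1 subr0 scaler0 add0r.
- move=> x; have [[r n] <-] := pi_sur x; exists r, n; rewrite gE /x0 -linearZ -linearD.
  f_equal; change ((r, n) = (r * 1 + 0, r *: (0 : N) + n)).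
  by rewrite mulr1 scaler0 addr0 add0r.
Qed.
End Pushout.

Lemma fin_gen_adjoin (R : comUnitRingType) (N X : lmodType R) (g : {linear N -> X}) (x0 : X) :
  fin_gen N -> (forall x, exists (r : R) (n : N), x = r *: x0 + g n) -> fin_gen X.
Proof.
move=> [k [v hv]] X_gen.
exists k.+1, (fun i => if unlift ord0 i is Some i' then g (v i') else x0) => x.
have [r [n ->]] := X_gen x; have [c ->] := hv n.
exists (fun i => if unlift ord0 i is Some i' then c i' else r).
rewrite big_ord_recl unlift_none; congr (_ + _).
by rewrite linear_sum; apply: eq_bigr => i _; rewrite liftK linearZ.
Qed.

Section Burch.
Variables (R : comUnitRingType) (I : R -> Prop) (X : lmodType R).
Hypothesis I_ideal : is_ideal I.

Lemma colon_sub (S : X -> Prop) : submodule S -> forall x, S x -> colon S I x.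
Proof. by case=> _ _ SZ x hx r _; apply: SZ. Qed.

(* S is Burch exactly when some product r s with r in I and s in (S :_X I)
   falls outside I S (the inclusion I S <= I (S :_X I) always holds). *)
Lemma burchP (S : X -> Prop) : submodule S ->
  burch I S <-> exists r s, [/\ I r, colon S I s & ~ ideal_mul I S (r *: s)].
Proof.
move=> hS; split=> [hb|[r [s [Ir Ss rs]]]]; last by move=> h; apply/rs/h; apply: ideal_mul1.
apply: NNPP => no_wit; apply: hb => x; split; last by apply: ideal_mul_mono; apply: colon_sub.
apply: ideal_mul_min (ideal_mul_submodule _ I_ideal) _ x => r s Ir Ss.
by apply: NNPP => rs; apply: no_wit; exists r, s.
Qed.

Lemma burch_ext (S S' : X -> Prop) : (forall x, S x <-> S' x) -> burch I S -> burch I S'.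
Proof.
move=> e hb h; apply: hb => x.
have ec y : colon S I y <-> colon S' I y by split=> hy r hr; apply/e; apply: hy.
by rewrite (ideal_mul_ext _ ec) (ideal_mul_ext _ e); apply: h.
Qed.
End Burch.

Section MaximalIdealHoms.
Variables (R : comUnitRingType) (m : R -> Prop).
Hypothesis m_ideal : is_ideal m.
Variables (M : lmodType R) (iota : {linear M -> R^o}).
Hypothesis Hiota : is_submod (M:=R^o) m iota.
Variable N : lmodType R.

Local Notation mN := (ideal_mul m (fun _ : N => True)).

Lemma iota_m y : m (iota y). Proof. by apply/Hiota.2; exists y. Qed.
Lemma m_iota r : m r -> exists y, iota y = r. Proof. by move/Hiota.2. Qed.

Definition hom_m_nontrivial := exists (f : {linear M -> N}) y, ~ mN (f y).

(* (2) <-> pivot: f (x) k is nonzero iff f (m) is not contained in m N. *)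
Lemma tensor_iff_pivot (QM : lmodType R) (piM : {linear M -> QM})
    (HpiM : is_quotient (ideal_mul m (fun _ : M => True)) piM)
    (QN : lmodType R) (piN : {linear N -> QN}) (HpiN : is_quotient mN piN) :
  (exists (f : {linear M -> N}) (fbar : {linear QM -> QN}),
     (forall x, fbar (piM x) = piN (f x)) /\ exists z, fbar z <> 0) <-> hom_m_nontrivial.
Proof.
case: HpiM HpiN => [piM_sur piM_ker] [piN_sur piN_ker]; split.
  move=> [f [fbar [fbarE [z fbar_z]]]]; have [x xz] := piM_sur z.
  by exists f, x => /piN_ker; rewrite -fbarE xz.
move=> [f [y fy]].
have [h hE] : exists h : {linear M -> QN}, forall x, h x = piN (f x).
  by apply: linear_exists => a x z; rewrite !linearP.
have [fbar fbarE] : exists fbar : {linear QM -> QN}, forall x, fbar (piM x) = h x.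
  apply: factor_through_surj piM_sur _ => x /piM_ker mx.
  by rewrite hE; apply/piN_ker; apply: ideal_mul_image mx.
exists f, fbar; split=> [x|]; first by rewrite fbarE hE.
by exists (piM y); rewrite fbarE hE => /piN_ker.
Qed.

(* (3) <-> pivot: the trace of m in N is the sum of the images f (m). *)
Lemma trace_iff_pivot : ~ (forall x, @trace R M N x -> mN x) <-> hom_m_nontrivial.
Proof.
split=> [no_sub|[f [y fy]] sub]; last first.
  by apply/fy/sub; exists 1%N, (fun _ => f), (fun _ => y); rewrite big_ord1.
apply: NNPP => no_piv; apply: no_sub => _ [n [fs [ys ->]]].
apply: submod_sum (ideal_mul_submodule _ m_ideal) _ => i _.
by apply: NNPP => fi; apply: no_piv; exists (fs i), (ys i).
Qed.

(* (4) <-> pivot: f lifts through the inclusion j : m N -> N iff f (m) <= m N. *)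
Lemma lift_iff_pivot (P : lmodType R) (j : {linear P -> N}) (Hj : is_submod mN j) :
  ~ (forall f : {linear M -> N}, exists g : {linear M -> P}, forall x, j (g x) = f x)
  <-> hom_m_nontrivial.
Proof.
case: Hj => [j_inj j_img]; split=> [no_lift|[f [y fy]] lift]; last first.
  by have [g gE] := lift f; apply: fy; rewrite -gE; apply/j_img; exists (g y).
apply: NNPP => no_piv; apply: no_lift => f; apply: factor_through_inj j_inj _ => x.
by apply/j_img; apply: NNPP => fx; apply: no_piv; exists f, x.
Qed.

(* (1) -> pivot: given a Burch witness r s, with s in (g N :_X m) and
   r = iota y, the map y' |-> iota y' s factors through g as some f, and
   f y is not in m N because g (f y) = r s is not in m (g N). *)
Lemma pivot_of_burch (X : lmodType R) (g : {linear N -> X}) : injective g ->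
  burch m (fun x : X => exists n, g n = x) -> hom_m_nontrivial.
Proof.
move=> g_inj /(burchP m_ideal (image_submodule g)) [r [s [mr s_colon rs]]].
have [f0 f0E] : exists f0 : {linear M -> X}, forall y, f0 y = iota y *: s.
  by apply: linear_exists => a x y; rewrite linearP scalerDl scalerA.
have [f fE] : exists f : {linear M -> N}, forall y, g (f y) = f0 y.
  by apply: factor_through_inj g_inj _ => y; rewrite f0E; apply/s_colon/iota_m.
have [y ry] := m_iota mr; exists f, y => fy; apply: rs.
by rewrite -ry -f0E -fE; apply: ideal_mul_image fy => n _; exists n.
Qed.

(* pivot -> (1): in the pushout X = N + R x0 of f along m <= R, the element
   x0 lies in (N :_X m) since iota y *: x0 = f y, while for f y0 outside m N
   the product iota y0 *: x0 = f y0 is outside m N = g^-1 (m (g N)). *)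
Lemma burch_of_pivot : fin_gen N -> hom_m_nontrivial ->
  exists X : lmodType R, fin_gen X /\
    exists g : {linear N -> X}, injective g /\ burch m (fun x : X => exists n, g n = x).
Proof.
move=> HN [f [y0 fy0]].
have [X [g [x0 [g_inj x0E X_gen]]]] := pushout_exists f Hiota.1.
exists X; split; first exact: fin_gen_adjoin HN X_gen.
exists g; split=> //; apply/(burchP m_ideal (image_submodule g)).
exists (iota y0), x0; split; first exact: iota_m.
  by move=> r /m_iota [y <-]; rewrite x0E; exists (f y).
rewrite x0E => /(ideal_mul_of_image m_ideal) [w [mw /g_inj wE]].
by apply: fy0; rewrite -wE.
Qed.
End MaximalIdealHoms.

Section ResidueField.
Variables (R : comUnitRingType) (m : R -> Prop).
Hypothesis m_ideal : is_ideal m.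
Variables (K : lmodType R) (rho : {linear R^o -> K}).
Hypothesis Hrho : is_quotient (M:=R^o) m rho.

Lemma residue_killed a : m a -> forall k : K, a *: k = 0.
Proof.
move=> ma k; have [s <-] := Hrho.1 k; rewrite -linearZ; apply/Hrho.2.
by change (m (a * s)); apply: ideal_mull.
Qed.

Lemma residue_eq u v : m (u - v) -> rho u = rho v.
Proof. by move=> /Hrho.2; rewrite linearB => /eqP; rewrite subr_eq0 => /eqP. Qed.

Lemma residue_kills_mV (V : lmodType R) (h : {linear V -> K}) x :
  ideal_mul m (fun _ : V => True) x -> h x = 0.
Proof.
apply: ideal_mul_min (kernel_submodule h) _ x => r s mr _ /=.
by rewrite linearZ; apply: residue_killed.
Qed.

(* depth N > 0 means no nonzero element of N is killed by m: such an element
   y would give the nonzero map k -> N, 1 |-> y. *)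
Lemma depth_pos_no_socle (N : lmodType R) (y : N) :
  depth_pos K N -> y <> 0 -> ~ (forall r, m r -> r *: y = 0).
Proof.
move=> Hd y0 m_kills.
have [h hE] : exists h : {linear R^o -> N}, forall r, h r = r *: y.
  apply: linear_exists => a r s; change ((a * r + s) *: y = a *: (r *: y) + s *: y).
  by rewrite scalerDl scalerA.
have [hb hbE] : exists hb : {linear K -> N}, forall r, hb (rho r) = h r.
  by apply: factor_through_surj Hrho.1 _ => r /Hrho.2 mr; rewrite hE; apply: m_kills.
by apply: y0; have := Hd hb (rho 1); rewrite hbE hE scale1r.
Qed.
End ResidueField.

Section RegularElement.
Variables (R : comUnitRingType) (m : R -> Prop).
Hypotheses (R_noeth : noetherian_ring R) (m_ideal : is_ideal m).
Variables (K : lmodType R) (rho : {linear R^o -> K}).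
Hypothesis Hrho : is_quotient (M:=R^o) m rho.
Variable N : lmodType R.
Hypotheses (HN : fin_gen N) (Hd : depth_pos K N).

(* If depth N > 0, m contains N-regular elements outside any given ideal T
   not containing m: avoid T and the primes of a prime filtration of N not
   containing m; the remaining primes contain m and cannot annihilate a
   nonzero element. *)
Lemma nonzerodivisor_avoiding (T : R -> Prop) : is_ideal T -> (exists x, m x /\ ~ T x) ->
  exists a, [/\ m a, ~ T a & forall x : N, a *: x = 0 -> x = 0].
Proof.
move=> T_ideal mT.
have [fl [hfl fl_span]] := prime_filtration_exists R_noeth HN.
have in_fl P : List.In P (List.map snd fl) -> exists n, List.In (n, P) fl.
  by case/List.in_map_iff => -[n Q] [/= <- hin]; exists n.
have primes P : List.In P (List.map snd fl) -> prime_ideal P.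
  by case/in_fl => n hin; apply: (prime_filtration_prime hfl hin).
have [a [ma Ta a_avoids]] := prime_avoidance m_ideal primes T_ideal mT.
exists a; split=> // x ax0; apply: NNPP => x0.
have [n [P [hin Pa [y [y0 P_kills]]]]] := zero_divisor_filtration hfl (fl_span x) x0 ax0.
case: (classic (exists r, m r /\ ~ P r)) => [mP|mP].
  by apply: a_avoids Pa => //; apply: List.in_map hin.
apply: (depth_pos_no_socle Hrho Hd y0) => r mr; apply: P_kills.
by apply: NNPP => Pr; apply: mP; exists r.
Qed.
End RegularElement.

Lemma scal_linear (R : comUnitRingType) (N : lmodType R) (a : R) :
  exists g : {linear N -> N}, (forall x, g x = a *: x) /\
    (forall x, scal_sub a x <-> exists y, g y = x).
Proof.
have [g gE] : exists g : {linear N -> N}, forall x, g x = a *: x.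
  by apply: linear_exists => b x y; rewrite scalerDr !scalerA mulrC.
by exists g; split=> // x; split=> [[y ->]|[y <-]]; exists y; rewrite gE.
Qed.

Lemma regular_inj (R : comUnitRingType) (N : lmodType R) (a : R) :
  (forall x : N, a *: x = 0 -> x = 0) -> injective (fun x : N => a *: x).
Proof. by move=> a_nzd x y /eqP; rewrite -subr_eq0 -scalerBr => /eqP/a_nzd/eqP; rewrite subr_eq0 => /eqP. Qed.

Lemma scal_sub_submodule (R : comUnitRingType) (N : lmodType R) (a : R) :
  submodule (scal_sub (N:=N) a).
Proof.
have [g [_ g_img]] := scal_linear N a.
exact: submodule_ext (fun x => iff_sym (g_img x)) (image_submodule g).
Qed.

Section DepthPositive.
Variables (R : comUnitRingType) (m : R -> Prop).
Hypotheses (R_noeth : noetherian_ring R) (m_ideal : is_ideal m).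
Variables (M : lmodType R) (iota : {linear M -> R^o}).
Hypothesis Hiota : is_submod (M:=R^o) m iota.
Variables (K : lmodType R) (rho : {linear R^o -> K}).
Hypothesis Hrho : is_quotient (M:=R^o) m rho.
Variable N : lmodType R.
Hypothesis HN : fin_gen N.

Local Notation mN := (ideal_mul m (fun _ : N => True)).

(* The key consequence of depth N > 0: an f : m -> N with f (m) not in m N
   can be evaluated at an N-regular a = iota y with n = f y outside m N;
   then r n = f (r y) = a f (y_r) for r = iota y_r in m, so m n <= a N. *)
Lemma regular_pivot : depth_pos K N -> hom_m_nontrivial m M N ->
  exists a n, [/\ m a, regular_elt N a, ~ mN n & forall r, m r -> scal_sub a (r *: n)].
Proof.
move=> Hd [f [y0 fy0]].
pose T r := exists y, iota y = r /\ mN (f y).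
have [mN0 mND mNZ] := ideal_mul_submodule (fun _ : N => True) m_ideal.
have T_ideal : is_ideal T.
  split; first by exists 0; rewrite !linear0.
  - by move=> _ _ [y1 [<- h1]] [y2 [<- h2]]; exists (y1 + y2); rewrite !linearD; split=> //; apply: mND.
  - by move=> r _ [y [<- h]]; exists (r *: y); rewrite !linearZ; split=> //; apply: mNZ.
have mT : exists x, m x /\ ~ T x.
  exists (iota y0); split; first exact: iota_m.
  by case=> y [/Hiota.1 ->].
have [a [ma Ta a_nzd]] := nonzerodivisor_avoiding R_noeth m_ideal Hrho HN Hd T_ideal mT.
have [y ya] := m_iota Hiota ma.
have fy : ~ mN (f y) by move=> h; apply: Ta; exists y.
exists a, (f y); split=> //.
  split=> // a_sur; have [z fz] := a_sur (f y); apply: fy; rewrite fz.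
  exact: ideal_mul1.
move=> r /(m_iota Hiota) [yr <-]; exists (f yr); rewrite -ya -!linearZ; f_equal.
by apply: Hiota.1; rewrite !linearZ; change (iota yr * iota y = iota y * iota yr); rewrite mulrC.
Qed.
End DepthPositive.

Section ScalarBurch.
Variables (R : comUnitRingType) (m : R -> Prop).
Hypothesis m_ideal : is_ideal m.
Variable N : lmodType R.

Local Notation mN := (ideal_mul m (fun _ : N => True)).

(* If a is N-regular, m n <= a N and n is not in m N, then a N is Burch in N,
   witnessed by a n: it lies in m (aN :_N m) but not in m (a N) = a (m N). *)
Lemma burch_scal (a : R) (n : N) : m a -> (forall x : N, a *: x = 0 -> x = 0) ->
  ~ mN n -> (forall r, m r -> scal_sub a (r *: n)) -> burch m (scal_sub (N:=N) a).
Proof.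
move=> ma a_nzd mn mn_aN.
have [g [gE g_img]] := scal_linear N a.
apply/(burchP m_ideal (scal_sub_submodule N a)).
exists a, n; split=> // /(ideal_mul_ext _ g_img) /(ideal_mul_of_image m_ideal) [w [mw]].
by rewrite gE => /(regular_inj a_nzd) wn; apply: mn; rewrite -wn.
Qed.

(* (6) -> (1): when a is N-regular, N embeds into itself by a with image a N. *)
Lemma burch_embedding_of_scal (a : R) : fin_gen N ->
  (forall x : N, a *: x = 0 -> x = 0) -> burch m (scal_sub (N:=N) a) ->
  exists X : lmodType R, fin_gen X /\
    exists g : {linear N -> X}, injective g /\ burch m (fun x : X => exists n, g n = x).
Proof.
move=> HN a_nzd hb; have [g [gE g_img]] := scal_linear N a.
exists N; split=> //; exists g; split; last exact: burch_ext g_img hb.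
by move=> x y; rewrite !gE => /(regular_inj a_nzd).
Qed.
End ScalarBurch.

Section ResidueSummand.
Variables (R : comUnitRingType) (m : R -> Prop).
Hypotheses (R_noeth : noetherian_ring R) (Hloc : local_max m).
Variables (K : lmodType R) (rho : {linear R^o -> K}).
Hypothesis Hrho : is_quotient (M:=R^o) m rho.
Variable N : lmodType R.
Hypothesis HN : fin_gen N.

Local Notation mN := (ideal_mul m (fun _ : N => True)).

Let m_ideal : is_ideal m. Proof. by case: Hloc. Qed.
Let m_unit c : ~ m c -> c \is a GRing.unit. Proof. by case: Hloc => _ _; apply. Qed.

(* A submodule S maximal among those containing m N and avoiding n is a
   complement of the line R n: N = S + R n. *)
Lemma complement_of_line (n : N) : ~ mN n ->
  exists S : N -> Prop, [/\ submodule S, ~ S n & forall x, exists c, S (x - c *: n)].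
Proof.
move=> mn.
pose F (S : N -> Prop) := [/\ submodule S, forall x, mN x -> S x & ~ S n].
have [S [[hS mS Sn] S_max]] := noetherian_maximal (noetherian_fg R_noeth HN)
  (fun S (FS : F S) => let: And3 h _ _ := FS in h)
  (And3 (ideal_mul_submodule _ m_ideal) (fun x h => h) mn).
have [S0 SD SZ] := hS.
exists S; split=> // x; case: (classic (S x)) => Sx; first by exists 0; rewrite scale0r subr0.
pose S2 v := exists s d, S s /\ v = s + d *: x.
have hS2 : submodule S2.
  rewrite /submodule; split; first by exists 0, 0; rewrite scale0r addr0.
  - move=> _ _ [s1 [d1 [h1 ->]]] [s2 [d2 [h2 ->]]]; exists (s1 + s2), (d1 + d2).
    by split; [apply: SD|rewrite scalerDl addrACA].
  - by move=> c _ [s [d [h ->]]]; exists (c *: s), (c * d); rewrite scalerDr scalerA; split=> //; apply: SZ.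
have S_S2 y : S y -> S2 y by move=> Sy; exists y, 0; rewrite scale0r addr0.
have [s [d [Ss en]]] : S2 n.
  apply: NNPP => S2n; apply: Sx; apply: (S_max S2) => //; last by exists 0, 1; rewrite scale1r add0r.
  by split=> // y /(mS y) /S_S2.
have md : ~ m d by move=> md; apply: Sn; rewrite en; apply: SD (mS _ (ideal_mul1 md _)).
exists d^-1; rewrite en scalerDr scalerA mulVr ?scale1r ?m_unit //.
by rewrite opprD addrCA subrr addr0 -scaleN1r scalerA; apply: SZ.
Qed.

(* If n is not in m N, the coefficient of n in the decomposition N = S + R n
   gives, modulo m, a linear functional N -> k sending n to 1. *)
Lemma functional_to_residue (n : N) : ~ mN n -> exists phi : {linear N -> K}, phi n = rho 1.
Proof.
move=> mn; have [S [hS Sn S_compl]] := complement_of_line mn.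
have [S0 SD SZ] := hS.
have coef_m c : S (c *: n) -> m c.
  move=> Scn; apply: NNPP => mc; apply: Sn.
  by have := SZ c^-1 _ Scn; rewrite scalerA mulVr ?scale1r ?m_unit.
have coef_eq x c1 c2 : S (x - c1 *: n) -> S (x - c2 *: n) -> rho c1 = rho c2.
  move=> h1 h2; apply: (residue_eq Hrho); apply: coef_m.
  by have := submodB hS h2 h1; rewrite opprB addrC addrA subrK -scalerBl.
pose c x := epsilon (inhabits 0) (fun c => S (x - c *: n)).
have cP x : S (x - c x *: n).
  exact: (epsilon_spec (inhabits 0) (fun c => S (x - c *: n)) (S_compl x)).
have [phi phiE] : exists phi : {linear N -> K}, forall x, phi x = rho (c x).
  apply: linear_exists => a x y.
  have -> : a *: rho (c x) + rho (c y) = rho (a * c x + c y) by rewrite -linearZ -linearD.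
  apply: (coef_eq (a *: x + y)); first exact: cP.
  rewrite scalerDl -scalerA opprD addrACA -scalerBr.
  by apply: SD; [apply: SZ|]; apply: cP.
by exists phi; rewrite phiE; apply: (coef_eq n); [apply: cP|rewrite scale1r subrr].
Qed.

(* pivot data -> (5): with m n <= a N and n outside m N, the map
   k -> N / a N, 1 |-> n is well defined, and a functional N -> k sending n
   to 1 (which kills a N as a is in m) gives a retraction. *)
Lemma residue_summand (a : R) (n : N) : m a -> ~ mN n ->
  (forall r, m r -> scal_sub a (r *: n)) ->
  exists (Q : lmodType R) (pi : {linear N -> Q}), is_quotient (scal_sub a) pi /\
    exists (i : {linear K -> Q}) (p : {linear Q -> K}), forall z, p (i z) = z.
Proof.
move=> ma mn mn_aN.
have [Q [pi [pi_sur pi_ker]]] := quotient_exists (scal_sub_submodule N a).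
exists Q, pi; split=> //.
have [phi phi_n] := functional_to_residue mn.
have [h hE] : exists h : {linear R^o -> Q}, forall r, h r = pi (r *: n).
  apply: linear_exists => b r s; rewrite -linearP; f_equal.
  by change ((b * r + s) *: n = b *: (r *: n) + s *: n); rewrite scalerDl scalerA.
have [i iE] : exists i : {linear K -> Q}, forall r, i (rho r) = h r.
  by apply: factor_through_surj Hrho.1 _ => r /Hrho.2 mr; rewrite hE; apply/pi_ker/mn_aN.
have [p pE] : exists p : {linear Q -> K}, forall x, p (pi x) = phi x.
  apply: factor_through_surj pi_sur _ => _ /pi_ker [z ->].
  by rewrite linearZ; apply: (residue_killed m_ideal Hrho ma).
exists i, p => z; have [r <-] := Hrho.1 z.
rewrite iE hE pE linearZ phi_n -linearZ; f_equal.
by change (r * 1 = r); rewrite mulr1.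
Qed.
End ResidueSummand.

Section SummandPivot.
Variables (R : comUnitRingType) (m : R -> Prop).
Hypothesis Hloc : local_max m.
Variables (M : lmodType R) (iota : {linear M -> R^o}).
Hypothesis Hiota : is_submod (M:=R^o) m iota.
Variables (K : lmodType R) (rho : {linear R^o -> K}).
Hypothesis Hrho : is_quotient (M:=R^o) m rho.
Variable N : lmodType R.

(* (5) -> pivot: lift i 1 to n in N; then m n <= a N, so y |-> (iota y n) / a
   is a map f : m -> N with f a = n, and n is not in m N since the retraction
   sends its class to 1 <> 0 while it kills m N. *)
Lemma pivot_of_residue_summand (a : R) : m a -> (forall x : N, a *: x = 0 -> x = 0) ->
  (exists (Q : lmodType R) (pi : {linear N -> Q}), is_quotient (scal_sub a) pi /\
    exists (i : {linear K -> Q}) (p : {linear Q -> K}), forall z, p (i z) = z) ->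
  hom_m_nontrivial m M N.
Proof.
move=> ma a_nzd [Q [pi [[pi_sur pi_ker] [i [p ipK]]]]].
have [n pi_n] := pi_sur (i (rho 1)).
have mn_aN r : m r -> scal_sub a (r *: n).
  move=> mr; apply/pi_ker; rewrite linearZ pi_n -linearZ -linearZ.
  have -> : r *: (1 : R^o) = r by change (r * 1 = r); rewrite mulr1.
  have -> : rho r = 0 by apply/Hrho.2.
  exact: linear0.
have [g [gE g_img]] := scal_linear N a.
have g_inj : injective g by move=> x y; rewrite !gE => /(regular_inj a_nzd).
have [f0 f0E] : exists f0 : {linear M -> N}, forall y, f0 y = iota y *: n.
  by apply: linear_exists => b x y; rewrite linearP scalerDl scalerA.
have [f fE] : exists f : {linear M -> N}, forall y, g (f y) = f0 y.
  by apply: factor_through_inj g_inj _ => y; apply/g_img; rewrite f0E; apply/mn_aN/(iota_m Hiota).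
have [ya ya_a] := m_iota Hiota ma.
have f_ya : f ya = n by apply: g_inj; rewrite fE f0E ya_a gE.
exists f, ya; rewrite f_ya => mn.
have [pp ppE] : exists pp : {linear N -> K}, forall x, pp x = p (pi x).
  by apply: linear_exists => b x y; rewrite !linearP.
have m_ideal : is_ideal m by case: Hloc.
have : pp n = 0 := residue_kills_mV m_ideal Hrho pp mn.
by rewrite ppE pi_n ipK => /Hrho.2; case: Hloc.
Qed.
End SummandPivot.

Theorem lemma3p9
  (R : comUnitRingType) (m : R -> Prop)
  (HR : noetherian_ring R) (Hloc : local_max m)
  (N : lmodType R) (HN : fin_gen N)
  (* M, iota : a model of the ideal m as an R-module *)
  (M : lmodType R) (iota : {linear M -> R^o}) (Hiota : is_submod (M:=R^o) m iota)
  (* K, rho : a model of the residue field k = R/m *)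
  (K : lmodType R) (rho : {linear R^o -> K}) (Hrho : is_quotient (M:=R^o) m rho)
  (* m (x) k = m/m^2 and N (x) k = N/mN *)
  (QM : lmodType R) (piM : {linear M -> QM})
  (HpiM : is_quotient (ideal_mul m (fun _ : M => True)) piM)
  (QN : lmodType R) (piN : {linear N -> QN})
  (HpiN : is_quotient (ideal_mul m (fun _ : N => True)) piN)
  (* P, j : a model of the submodule mN of N *)
  (P : lmodType R) (j : {linear P -> N})
  (Hj : is_submod (ideal_mul m (fun _ : N => True)) j) :
  let P1 := exists (X : lmodType R), fin_gen X /\
              exists g : {linear N -> X}, injective g /\
                burch m (fun x : X => exists y, g y = x) in
  let P2 := exists (f : {linear M -> N}) (fbar : {linear QM -> QN}),
              (forall x, fbar (piM x) = piN (f x)) /\ exists z, fbar z <> 0 in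
  let P3 := ~ (forall x, @trace R M N x -> ideal_mul m (fun _ : N => True) x) in
  let P4 := ~ (forall f : {linear M -> N}, exists g : {linear M -> P},
                 forall x, j (g x) = f x) in
  let P5 := exists a, m a /\ regular_elt N a /\
              exists (Q : lmodType R) (pi : {linear N -> Q}),
                is_quotient (scal_sub a) pi /\
                exists (i : {linear K -> Q}) (p : {linear Q -> K}),
                  forall z, p (i z) = z in
  let P6 := exists a, m a /\ regular_elt N a /\ burch m (scal_sub (N:=N) a) in
  [/\ P1 <-> P2, P1 <-> P3, P1 <-> P4 &
      (depth_pos K N -> (P1 <-> P5) /\ (P1 <-> P6))].
Proof.
move=> P1 P2 P3 P4 P5 P6.
have m_ideal : is_ideal m by case: Hloc.
have e1 : P1 <-> hom_m_nontrivial m M N.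
  split=> [[X [_ [g [g_inj hb]]]]|piv]; first exact (pivot_of_burch m_ideal Hiota g_inj hb).
  exact (burch_of_pivot m_ideal Hiota HN piv).
have e2 := tensor_iff_pivot HpiM HpiN.
have e3 := trace_iff_pivot m_ideal M N.
have e4 := lift_iff_pivot M Hj.
split; [by rewrite /P2 e1 e2|by rewrite /P3 e1 e3|by rewrite /P4 e1 e4|move=> Hd].
have regular_of_pivot := regular_pivot HR m_ideal Hiota Hrho HN Hd.
split; rewrite e1; split.
- move=> /regular_of_pivot [a [n [ma a_reg mn mn_aN]]].
  by exists a; split=> //; split=> //; exact (residue_summand HR Hloc Hrho HN ma mn mn_aN).
- by case=> a [ma [[a_nzd _] summand]]; exact (pivot_of_residue_summand Hloc Hiota Hrho ma a_nzd summand).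
- move=> /regular_of_pivot [a [n [ma a_reg mn mn_aN]]].
  by exists a; split=> //; split=> //; exact (burch_scal m_ideal ma a_reg.1 mn mn_aN).
- by case=> a [_ [[a_nzd _] hb]]; apply/e1; exact (burch_embedding_of_scal HN a_nzd hb).
Qed.
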